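(* Let $K$ be a field, $q\in K[x_1]\setminus K$, and let $F=\{f_1,\dots,f_s\}\subset R_q[\tilde{\bm{x}}]\setminus R_q$. For every $f\in R_q[\tilde{\bm{x}}]$ there exist a multiplier $\lambda\in R_q^\times$, a remainder $r\in R_q[\tilde{\bm{x}}]$ that is properly reduced with respect to $F$, and quotients $h_1,\dots,h_s\in R_q[\tilde{\bm{x}}]$ such that $$\lambda f=\sum_{j=1}^s h_jf_j+r$$ and $$\operatorname{lm}(f)=\max\Bigl\{\max_{1\le j\le s}\{\operatorname{lm}(h_j)\cdot\operatorname{lm}(f_j)\},\ \operatorname{lm}(r)\Bigr\}.$$
   Context: $R_q:=\{r\in K[x_1]:\deg r<\deg q\}$ with addition and multiplication modulo $q$, so $R_q\cong K[x_1]/(q)$; $R_q^\times$ is its group of units, $R_q^\ast=R_q\setminus\{0\}$. $\sigma_q:K[x_1]\to R_q$ sends $f$ to its remainder modulo $q$, and $\iota_q:R_q\hookrightarrow K[x_1]$ is the inclusion; both are extended coefficientwise to polynomials in $\tilde{\bm{x}}=(x_2,\dots,x_n)$. A monomial ordering $\succ$ on monomials in $\tilde{\bm{x}}$ is fixed; for nonzero $f\in R_q[\tilde{\bm{x}}]$, $\operatorname{lm}(f)$ is the $\succ$-largest monomial with nonzero coefficient and $\operatorname{lc}(f)$ that coefficient. Gcds in $K[x_1]$ are monic, $\operatorname{lcm}(a,b)=ab/\gcd(a,b)$. A nonzero term $c_\alpha\tilde{\bm{x}}^\alpha$ of a polynomial in $R_q[\tilde{\bm{x}}]$ is properly reducible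 with respect to $F$ if there is $f_j\in F$ with $\operatorname{lm}(f_j)\mid\tilde{\bm{x}}^\alpha$ such that the interim multiplier $\mu:=\sigma_q\bigl(\operatorname{lcm}(l_\alpha,l_j)/l_\alpha\bigr)$ lies in $R_q^\times$, where $l_\alpha=\iota_q(c_\alpha)$, $l_j=\iota_q(\operatorname{lc}(f_j))$. A polynomial is properly reduced with respect to $F$ if none of its terms is properly reducible (in particular $0$ is properly reduced). *)

From HB Require Import structures.
From mathcomp Require Import all_boot all_order all_algebra.
From mathcomp Require Import mpoly.
Set Implicit Arguments. Unset Strict Implicit. Unset Printing Implicit Defensive.
Import Order.TTheory GRing.Theory.
Import Pdiv.Field.
Local Open Scope ring_scope.

Section Defs.
Variable K : fieldType.

(* Monic associate of q; K[x1]/(q) = K[x1]/(qmonic q). *)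
Definition qmonic (q : {poly K}) : {poly K} := (lead_coef q)^-1 *: q.

Definition Rq (q : {poly K}) := {poly %/ qmonic q}.

Definition sigma_q (q : {poly K}) (f : {poly K}) : Rq q := in_qpoly (qmonic q) f.

Definition iota_q (q : {poly K}) (c : Rq q) : {poly K} := val c.

Definition mgcd (a b : {poly K}) : {poly K} :=
  (lead_coef (gcdp a b))^-1 *: gcdp a b.
Definition plcm (a b : {poly K}) : {poly K} := (a * b) %/ mgcd a b.
End Defs.

Section Monomial.
Variable m : nat.

Definition monomial_order (le : rel 'X_{1..m}) : Prop :=
  [/\ [/\ reflexive le, antisymmetric le, transitive le & total le],
      (forall a b c : 'X_{1..m}, le a b -> le (a + c)%MM (b + c)%MM)
    & (forall a : 'X_{1..m}, le 0%MM a)].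

(* maximum of optional monomials; None stands for "no monomial" (bottom). *)
Definition omax (le : rel 'X_{1..m}) (a b : option 'X_{1..m}) :=
  match a, b with
  | None, _ => b
  | _, None => a
  | Some x, Some y => if le x y then Some y else Some x
  end.

Definition omul (a b : option 'X_{1..m}) :=
  match a, b with
  | Some x, Some y => Some (x + y)%MM
  | _, _ => None
  end.

Variable R : ringType.

Definition lm (le : rel 'X_{1..m}) (f : {mpoly R[m]}) : option 'X_{1..m} :=
  foldr (fun x acc => omax le (Some x) acc) None (msupp f).

Definition lc (le : rel 'X_{1..m}) (f : {mpoly R[m]}) : R :=
  if lm le f is Some a then f@_a else 0.
End Monomial.

Section Reduction.
Variables (K : fieldType) (q : {poly K}) (m s : nat).
Variable le : rel 'X_{1..m}.
Variable F : 'I_s -> {mpoly (Rq q)[m]}.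

Definition properly_reducible (c : Rq q) (alpha : 'X_{1..m}) : Prop :=
  exists j : 'I_s, exists2 beta : 'X_{1..m},
    lm le (F j) = Some beta /\ (beta <= alpha)%MM &
    let l_alpha := iota_q c in
    let l_j := iota_q (lc le (F j)) in
    sigma_q q (plcm l_alpha l_j %/ l_alpha) \is a GRing.unit.

Definition properly_reduced (r : {mpoly (Rq q)[m]}) : Prop :=
  forall alpha, alpha \in msupp r -> ~ properly_reducible r@_alpha alpha.
End Reduction.

From HB Require Import structures.
From mathcomp Require Import all_boot all_order all_algebra.
From mathcomp Require Import mpoly.
From Stdlib Require Import Classical ClassicalEpsilon.
Import GRing.Theory.
Set Implicit Arguments. Unset Strict Implicit.
Local Open Scope ring_scope.

(* A unit interim multiplier forces lc(f_j) to divide the coefficient in R_q: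
   with g = gcd(l, l_j) the multiplier is l_j / g, and (l_j / g) l = (l / g) l_j.
   So a properly reducible leading term can be cancelled exactly, any other
   leading term is moved to the remainder, and lambda = 1 always works.  The
   recursion is on the leading monomial, which is well founded for a monomial
   order by Dickson's lemma. *)

Lemma exists_min_after (w : nat -> nat) i :
  exists j, (i < j)%N /\ forall k, (i < k)%N -> (w j <= w k)%N.
Proof.
suff: forall n j, (w j <= n)%N -> (i < j)%N ->
    exists j, (i < j)%N /\ forall k, (i < k)%N -> (w j <= w k)%N.
  by apply; [exact: leqnn | exact: ltnSn].
elim=> [|n IH] j wj ij.
  by exists j; split=> // k _; move: wj; rewrite leqn0 => /eqP ->.
have [[k [ik wkj]]|no_lower] := classic (exists k, (i < k)%N /\ (w k < w j)%N).
  by apply: (IH k) => //; rewrite -ltnS (leq_trans wkj).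
exists j; split=> // k ik; rewrite leqNgt; apply/negP => wkj.
by apply: no_lower; exists k.
Qed.

Lemma nondecreasing_subseq (w : nat -> nat) :
  exists2 phi : nat -> nat, {homo phi : n n' / (n < n')%N}
                          & forall n, (w (phi n) <= w (phi n.+1))%N.
Proof.
have [next nextP] := choice _ (exists_min_after w).
exists (fun n => iter n.+1 next 0%N) => [|n].
  by apply: homo_ltn => [y x z|n]; [exact: ltn_trans | exact: (nextP _).1].
rewrite [X in (_ <= w X)%N]iterS; apply: (nextP _).2.
by rewrite iterS; apply: ltn_trans (nextP _).1 (nextP _).1.
Qed.

Section Dickson.
Variable m : nat.

Lemma dickson_prefix (u : nat -> 'X_{1..m}) k :
  exists2 phi : nat -> nat, {homo phi : n n' / (n < n')%N}
    & forall i : 'I_m, (i < k)%N -> forall n, (u (phi n) i <= u (phi n.+1) i)%N.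
Proof.
elim: k => [|k [phi phi_incr u_mono]]; first by exists id.
have [km|mk] := ltnP k m; last first.
  by exists phi => // i ik; apply: u_mono; apply: leq_trans (ltn_ord i) mk.
have [psi psi_incr w_mono] := nondecreasing_subseq (fun n => u (phi n) (Ordinal km)).
exists (phi \o psi) => [n n' /psi_incr/phi_incr //|i].
rewrite ltnS leq_eqVlt => /predU1P[ik|ik] n.
  have -> : i = Ordinal km by apply: val_inj.
  exact: w_mono.
have := homo_leq (f := fun n => u (phi n) i) leqnn leq_trans (u_mono i ik).
by apply; apply: ltnW; apply: psi_incr.
Qed.

Lemma dickson (u : nat -> 'X_{1..m}) : exists i j, (i < j)%N /\ (u i <= u j)%MM.
Proof.
have [phi phi_incr u_mono] := dickson_prefix u m.
exists (phi 0%N), (phi 1%N); split; first exact: phi_incr.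
by apply/mnm_lepP => i; apply: u_mono.
Qed.

End Dickson.

Lemma not_Acc_descend (T : Type) (R : T -> T -> Prop) x :
  ~ Acc R x -> exists y, R y x /\ ~ Acc R y.
Proof.
move=> not_acc; apply: NNPP => no_desc; apply: not_acc; constructor => y yx.
by apply: NNPP => not_acc_y; apply: no_desc; exists y.
Qed.

Section InterimMultiplier.
Variables (K : fieldType) (q : {poly K}).

Lemma sigma_qK (c : Rq q) : sigma_q q (iota_q c) = c.
Proof. by apply: val_inj; apply: in_qpoly_small (size_mk_monic c). Qed.

Lemma unit_interim_multiplier_dvd (c lcj : Rq q) : c != 0 ->
  sigma_q q (plcm (iota_q c) (iota_q lcj) %/ iota_q c) \is a GRing.unit ->
  exists d, c = d * lcj.
Proof.
set l := iota_q c; set lj := iota_q lcj => c0.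
have l0 : l != 0 by apply: contraNneq c0 => l0; apply/eqP/val_inj.
have lg0 : (lead_coef (gcdp l lj))^-1 != 0.
  by rewrite invr_eq0 lead_coef_eq0 gcdp_eq0 negb_and l0.
set g := mgcd l lj.
have gl : g %| l by rewrite /g /mgcd dvdpZl // dvdp_gcdl.
have glj : g %| lj by rewrite /g /mgcd dvdpZl // dvdp_gcdr.
rewrite /plcm -divp_mulA // mulKp // => mu_unit.
exists ((sigma_q q (lj %/ g))^-1 * sigma_q q (l %/ g)).
have cross : sigma_q q (l %/ g) * lcj = sigma_q q (lj %/ g) * c.
  rewrite -(sigma_qK lcj) -(sigma_qK c) -/l -/lj /sigma_q -!in_qpolyM.
  by rewrite -{1}(divpK glj) -{2}(divpK gl) !mulrA [_ * (lj %/ g)]mulrC.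
by rewrite -mulrA cross mulKr.
Qed.

End InterimMultiplier.

Section MonomialOrder.
Variables (m : nat) (le : rel 'X_{1..m}).
Hypothesis le_mo : monomial_order le.

Lemma mo_refl a : le a a. Proof. by case: le_mo => [[]]. Qed.

Lemma mo_anti a b : le a b -> le b a -> a = b.
Proof. by case: le_mo => [[_ anti _ _] _ _] ab ba; apply: anti; rewrite ab ba. Qed.

Lemma mo_trans b a c : le a b -> le b c -> le a c.
Proof. by case: le_mo => [[_ _ trans _] _ _]; apply: trans. Qed.

Lemma mo_total a b : le a b || le b a.
Proof. by case: le_mo => [[_ _ _ total] _ _]; apply: total. Qed.

Lemma mo_add a a' b b' : le a a' -> le b b' -> le (a + b)%MM (a' + b')%MM.
Proof.
case: le_mo => [_ addr _] aa' bb'; apply: mo_trans (addr _ _ b aa') _.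
by rewrite ![(a' + _)%MM]addmC; apply: addr.
Qed.

Lemma mo_le_of_lem a b : (a <= b)%MM -> le a b.
Proof.
case: le_mo => [_ addr ge0] ab; rewrite -(submK ab).
by have := addr _ _ a (ge0 (b - a)%MM); rewrite add0m.
Qed.

Definition mo_lt a b := ~~ le b a.

Lemma mo_lt_trans b a c : mo_lt a b -> mo_lt b c -> mo_lt a c.
Proof.
rewrite /mo_lt => ba cb; apply: contra cb => ca.
have ab : le a b by have := mo_total a b; rewrite (negPf ba) orbF.
exact: mo_trans ca ab.
Qed.

Lemma mo_lt_wf : well_founded mo_lt.
Proof.
move=> a; apply: NNPP => not_acc_a.
have [next nextP] : exists next, forall x,
    ~ Acc mo_lt x -> mo_lt (next x) x /\ ~ Acc mo_lt (next x).
  apply: (choice (fun x y => ~ Acc mo_lt x -> mo_lt y x /\ ~ Acc mo_lt y)) => x.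
  have [acc_x|not_acc_x] := classic (Acc mo_lt x); first by exists x.
  by have [y] := not_Acc_descend not_acc_x; exists y.
pose u n := iter n next a.
have u_not_acc n : ~ Acc mo_lt (u n) by elim: n => // n /nextP[].
have u_desc : {homo u : i j / (i < j)%N >-> mo_lt j i}.
  apply: (homo_ltn (r := fun i j => mo_lt j i)) => [y x z xy yz|n].
    exact: mo_lt_trans yz xy.
  exact: (nextP _ (u_not_acc n)).1.
have [i [j [ij /mo_le_of_lem uij]]] := dickson u.
by move: (u_desc _ _ ij); rewrite /mo_lt uij.
Qed.

Definition ole (x y : option 'X_{1..m}) :=
  match x, y with
  | None, _ => true
  | Some _, None => false
  | Some a, Some b => le a b
  end.

Definition olt x y := ~~ ole y x.

Lemma ole_refl x : ole x x.
Proof. by case: x => //= a; apply: mo_refl. Qed.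

Lemma ole_trans y x z : ole x y -> ole y z -> ole x z.
Proof.
by case: x => [a|] //; case: y => [b|] //; case: z => [c|] //=; apply: mo_trans.
Qed.

Lemma ole_anti x y : ole x y -> ole y x -> x = y.
Proof. by case: x => [a|]; case: y => [b|] //= ab ba; rewrite (mo_anti ab ba). Qed.

Lemma olt_ole x y : olt x y -> ole x y.
Proof.
rewrite /olt; case: x => [a|]; case: y => [b|] //= ba.
by have := mo_total a b; rewrite (negPf ba) orbF.
Qed.

Lemma ole_lt_trans y x z : ole x y -> olt y z -> olt x z.
Proof. by move=> xy; apply: contra => zx; apply: ole_trans zx xy. Qed.

Lemma olt_wf : well_founded olt.
Proof.
have acc_None : Acc olt None by constructor => -[].
case=> [a|//]; elim/(well_founded_ind mo_lt_wf): a => a IH.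
by constructor => -[b|//] ba; apply: IH.
Qed.

Lemma omax_geL x y : ole x (omax le x y).
Proof.
case: x => [a|] //; case: y => [b|] /=; last exact: mo_refl.
by case: ifP => //; rewrite mo_refl.
Qed.

Lemma omax_geR x y : ole y (omax le x y).
Proof.
case: x => [a|] /=; first case: y => [b|] //=; last exact: ole_refl.
by case: ifP => [_|]; [apply: mo_refl | have := mo_total a b; case: (le a b)].
Qed.

Lemma omax_le x y z : ole x z -> ole y z -> ole (omax le x y) z.
Proof. by case: x => [a|]; case: y => [b|] //=; case: ifP. Qed.

Lemma omax_cases x y : omax le x y = x \/ omax le x y = y.
Proof. by case: x => [a|]; case: y => [b|] /=; try case: ifP; auto. Qed.

Lemma ole_omul x x' y y' : ole x x' -> ole y y' -> ole (omul x y) (omul x' y').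
Proof.
by case: x => [a|]; case: x' => [a'|]; case: y => [b|]; case: y' => [b'|] //=; apply: mo_add.
Qed.

Lemma fold_omax_ge (l : seq (option 'X_{1..m})) x :
  x \in l -> ole x (foldr (omax le) None l).
Proof.
elim: l => // y l IH; rewrite in_cons => /predU1P[->|/IH xl]; first exact: omax_geL.
exact: ole_trans xl (omax_geR _ _).
Qed.

Lemma fold_omax_le (l : seq (option 'X_{1..m})) z :
  {in l, forall x, ole x z} -> ole (foldr (omax le) None l) z.
Proof.
elim: l => // y l IH lz; apply: omax_le; first by apply: lz; rewrite mem_head.
by apply: IH => x xl; apply: lz; rewrite in_cons xl orbT.
Qed.

Section LeadingMonomial.
Variable R : nzRingType.
Implicit Types f g : {mpoly R[m]}.

Lemma lm_seqP (l : seq 'X_{1..m}) :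
  if foldr (fun x acc => omax le (Some x) acc) None l is Some a
  then a \in l /\ {in l, forall b, le b a} else l = [::].
Proof.
elim: l => [|x l] //=; case: foldr => [a [al la]|->] /=; last first.
  by split=> [|b]; rewrite ?mem_seq1 // => /eqP ->; apply: mo_refl.
case: ifP => [xa|ax].
  by split=> [|b]; rewrite in_cons ?al ?orbT // => /predU1P[->|/la].
have xa : le a x by have := mo_total x a; rewrite ax.
split=> [|b]; rewrite ?mem_head // in_cons => /predU1P[->|/la ba]; first exact: mo_refl.
exact: mo_trans ba xa.
Qed.

Lemma lmP f :
  if lm le f is Some a then a \in msupp f /\ {in msupp f, forall b, le b a} else f = 0.
Proof. by rewrite /lm; have := lm_seqP (msupp f); case: foldr => // /msuppnil0. Qed.

Lemma lm0 : lm le (0 : {mpoly R[m]}) = None.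
Proof. by rewrite /lm msupp0. Qed.

Lemma lm_eq0 f : lm le f = None -> f = 0.
Proof. by move=> f0; have := lmP f; rewrite f0. Qed.

Lemma lm_ge f b : b \in msupp f -> ole (Some b) (lm le f).
Proof.
move=> bf; have := lmP f; case: lm => [a [_ /(_ b bf)] //|f0].
by move: bf; rewrite f0 msupp0.
Qed.

Lemma lm_le_cat f g1 g2 : {subset msupp f <= msupp g1 ++ msupp g2} ->
  ole (lm le f) (omax le (lm le g1) (lm le g2)).
Proof.
move=> fg; have := lmP f; case: lm => [a [/fg] |] //.
rewrite mem_cat => /orP[/lm_ge ag1|/lm_ge ag2] _.
  exact: ole_trans ag1 (omax_geL _ _).
exact: ole_trans ag2 (omax_geR _ _).
Qed.

Lemma lmD_le f g : ole (lm le (f + g)) (omax le (lm le f) (lm le g)).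
Proof. exact/lm_le_cat/msuppD_le. Qed.

Lemma lmB_le f g : ole (lm le (f - g)) (omax le (lm le f) (lm le g)).
Proof. exact/lm_le_cat/msuppB_le. Qed.

Lemma lmM_le f g : ole (lm le (f * g)) (omul (lm le f) (lm le g)).
Proof.
have := lmP (f * g); case: lm => [a [/msuppM_le/allpairsP[[b c] /= [bf cg ->]] _]|] //.
by apply: (ole_omul (x := Some b) (y := Some c)); apply: lm_ge.
Qed.

Lemma lm_sum_le (I : Type) (l : seq I) (P : pred I) (G : I -> {mpoly R[m]}) z :
  (forall i, P i -> ole (lm le (G i)) z) -> ole (lm le (\sum_(i <- l | P i) G i)) z.
Proof.
move=> Gz; apply: (big_ind (fun p => ole (lm le p) z)) => // [|p p' pz p'z].
  by rewrite lm0.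
exact: ole_trans (lmD_le p p') (omax_le pz p'z).
Qed.

Lemma lm_scale_monomial_le (c : R) a : ole (lm le (c *: 'X_[a])) (Some a).
Proof.
have := lmP (c *: 'X_[a]); case: lm => [b [/msuppZ_le] |] //.
by rewrite msuppX mem_seq1 => /eqP -> _; apply: mo_refl.
Qed.

Lemma coef_eq0_of_lm_lt f a : olt (lm le f) (Some a) -> f@_a = 0.
Proof. by apply: contraTeq; rewrite -mcoeff_msupp => /lm_ge; rewrite /olt => ->. Qed.

Lemma lm_lt_of_coef_eq0 f a :
  ole (lm le f) (Some a) -> f@_a = 0 -> olt (lm le f) (Some a).
Proof.
have := lmP f; case: lm => [b [bf _] /= ba fa0|] //; rewrite /olt /=.
by apply: contraTN bf => ab; rewrite (mo_anti ba ab) mcoeff_msupp fa0 eqxx.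
Qed.

Lemma lm_sub_lt f g a : lm le f = Some a -> ole (lm le g) (Some a) -> g@_a = f@_a ->
  olt (lm le (f - g)) (Some a).
Proof.
move=> fa ga gfa; apply: lm_lt_of_coef_eq0; last by rewrite mcoeffB gfa subrr.
by apply: ole_trans (lmB_le f g) _; apply: omax_le; rewrite ?fa ?ole_refl.
Qed.

End LeadingMonomial.

Section Division.
Variables (K : fieldType) (q : {poly K}) (s : nat).
Variable F : 'I_s -> {mpoly (Rq q)[m]}.
Implicit Types (f p r : {mpoly (Rq q)[m]}) (h : 'I_s -> {mpoly (Rq q)[m]}).

Lemma properly_reducible_lc_dvd c a : c != 0 -> properly_reducible le F c a ->
  exists j beta d,
    [/\ lm le (F j) = Some beta, (beta <= a)%MM & c = d * lc le (F j)].
Proof.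
move=> c0 [j [beta [Fj ba] /(unit_interim_multiplier_dvd c0)[d cd]]].
by exists j, beta, d.
Qed.

Lemma properly_reduced_add_term r c a : properly_reduced le F r -> r@_a = 0 ->
  ~ properly_reducible le F c a -> properly_reduced le F (r + c *: 'X_[a]).
Proof.
move=> r_red ra c_irr b; rewrite mcoeff_msupp !mcoeffD mcoeffZ mcoeffX.
have [<-|ab] := eqVneq a b; first by rewrite ra mulr1 add0r.
by rewrite mulr0 addr0 => rb; apply: r_red; rewrite mcoeff_msupp.
Qed.

Definition bounded_division x f r h :=
  [/\ properly_reduced le F r, f = \sum_(j < s) h j * F j + r,
      forall j, ole (omul (lm le (h j)) (lm le (F j))) x
    & ole (lm le r) x].

Lemma bounded_division0 x : bounded_division x 0 0 (fun=> 0).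
Proof.
split=> [b||j|]; rewrite ?lm0 //; first by rewrite msupp0.
by rewrite big1 ?addr0 // => j _; rewrite mul0r.
Qed.

Lemma bounded_division_add_quotient x a f r h j p :
  ole x (Some a) -> bounded_division x f r h ->
  ole (omul (lm le p) (lm le (F j))) (Some a) ->
  bounded_division (Some a) (f + p * F j) r (fun i => h i + (if i == j then p else 0)).
Proof.
move=> xa [r_red Df hx rx] pa; split=> // [|i|]; last exact: ole_trans rx xa.
  have pFj : \sum_(i < s) (if i == j then p else 0) * F i = p * F j.
    by rewrite (bigD1 j) //= eqxx big1 ?addr0 // => i /negPf ->; rewrite mul0r.
  by under eq_bigr do rewrite mulrDl; rewrite big_split /= pFj Df addrAC.
have [->|_] := eqVneq i j; last by rewrite addr0; apply: ole_trans (hx i) xa.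
apply: ole_trans (ole_omul (lmD_le _ _) (ole_refl _)) _.
have [->|->] := omax_cases (lm le (h j)) (lm le p) => //.
exact: ole_trans (hx j) xa.
Qed.

Lemma bounded_division_add_term x a f r h c :
  olt x (Some a) -> bounded_division x f r h -> ~ properly_reducible le F c a ->
  bounded_division (Some a) (f + c *: 'X_[a]) (r + c *: 'X_[a]) h.
Proof.
move=> xa [r_red Df hx rx] c_irr; have xa' := olt_ole xa.
have ra : r@_a = 0 by apply: coef_eq0_of_lm_lt; apply: ole_lt_trans rx xa.
split; first exact: properly_reduced_add_term.
- by rewrite Df addrA.
- by move=> i; apply: ole_trans (hx i) xa'.
apply: ole_trans (lmD_le _ _) (omax_le (ole_trans rx xa') _).
exact: lm_scale_monomial_le.
Qed.

Lemma bounded_division_exists f : exists r h, bounded_division (lm le f) f r h.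
Proof.
move: {2}(lm le f) (erefl (lm le f)) => x.
elim/(well_founded_ind olt_wf): x f => [[a|] IH f fa]; last first.
  by exists 0, (fun=> 0); rewrite (lm_eq0 fa); apply: bounded_division0.
have f_a0 : f@_a != 0 by have := lmP f; rewrite fa mcoeff_msupp => -[].
have [[j [beta [d [Fj beta_a fd]]]]|f_irr] := classic (exists j beta d,
    [/\ lm le (F j) = Some beta, (beta <= a)%MM & f@_a = d * lc le (F j)]).
- pose p := d *: 'X_[(a - beta)%MM].
  have pFj_le : ole (omul (lm le p) (lm le (F j))) (Some a).
    rewrite Fj -(submK beta_a).
    exact: ole_omul (lm_scale_monomial_le _ _) (ole_refl _).
  have pFj_a : (p * F j)@_a = f@_a.
    by rewrite fd -{1}(submK beta_a) -scalerAl mcoeffZ [_ * F j]mulrC mcoeffMX /lc Fj.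
  have lt_a := lm_sub_lt fa (ole_trans (lmM_le _ _) pFj_le) pFj_a.
  have [r [h div_r]] := IH _ lt_a _ erefl.
  exists r, (fun i => h i + (if i == j then p else 0)); rewrite fa -(subrK (p * F j) f).
  exact: bounded_division_add_quotient (olt_ole lt_a) div_r pFj_le.
- pose t := f@_a *: 'X_[a].
  have t_a : t@_a = f@_a by rewrite mcoeffZ mcoeffX eqxx mulr1.
  have lt_a := lm_sub_lt fa (lm_scale_monomial_le _ _) t_a.
  have [r [h div_r]] := IH _ lt_a _ erefl.
  exists (r + t), h; rewrite fa -(subrK t f).
  apply: bounded_division_add_term lt_a div_r _.
  by move=> /(properly_reducible_lc_dvd f_a0)/f_irr.
Qed.

Lemma bounded_division_lm f r h : bounded_division (lm le f) f r h ->
  lm le f = omax le (foldr (omax le) None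
              [seq omul (lm le (h j)) (lm le (F j)) | j <- enum 'I_s]) (lm le r).
Proof.
case=> _ Df hf rf; set M := foldr _ _ _.
have hM j : ole (omul (lm le (h j)) (lm le (F j))) M.
  by apply: fold_omax_ge; apply/mapP; exists j; rewrite ?mem_enum.
apply: ole_anti; last first.
  by apply: omax_le rf; apply: fold_omax_le => _ /mapP[j _ ->]; apply: hf.
rewrite {1}Df; apply: ole_trans (lmD_le _ _) (omax_le _ (omax_geR _ _)).
apply: ole_trans (omax_geL _ _); apply: lm_sum_le => j _.
exact: ole_trans (lmM_le _ _) (hM j).
Qed.

End Division.
End MonomialOrder.

Theorem theorem5p3 (K : fieldType) (q : {poly K}) (m : nat)
  (le : rel 'X_{1..m}) (s : nat) (F : 'I_s -> {mpoly (Rq q)[m]}) :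
  (1 < size q)%N ->
  monomial_order le ->
  (forall j : 'I_s, forall c : Rq q, F j != c%:MP) ->
  forall f : {mpoly (Rq q)[m]},
  exists (lambda : Rq q) (r : {mpoly (Rq q)[m]}) (h : 'I_s -> {mpoly (Rq q)[m]}),
    [/\ lambda \is a GRing.unit,
        properly_reduced le F r,
        lambda *: f = \sum_(j < s) h j * F j + r
      & lm le f = omax le (foldr (omax le) None
                              [seq omul (lm le (h j)) (lm le (F j)) | j <- enum 'I_s])
                          (lm le r)].
Proof.
move=> _ le_mo _ f.
have [r [h div_r]] := bounded_division_exists le_mo F f.
exists 1, r, h; have [r_red Df _ _] := div_r.
by split; rewrite ?unitr1 ?scale1r //; apply: bounded_division_lm.
Qed.
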